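(* Let $p$ be a prime, $r\le s$ positive integers and $k\geq0$ an integer. Then $\lambda(p^kr,p^ks,p)$ is the $p^k$-multiple of $\lambda(r,s,p)$: if $\lambda(r,s,p)=(\lambda_1,\dots,\lambda_r)$ then $\lambda(p^kr,p^ks,p)$ is the partition of length $p^kr$ in which each $p^k\lambda_i$ appears $p^k$ times for each $i$, i.e. $(p^k\lambda_1,\dots,p^k\lambda_1,\dots,p^k\lambda_r,\dots,p^k\lambda_r)$.
   Context: For a positive integer $n$, let $J_n$ denote the $n\times n$ matrix with $1$s in positions $(i,i)$ for $1\le i\le n$ and $(i,i+1)$ for $1\le i<n$, and $0$s elsewhere. For $1\le r\le s$ and a field $F$ of characteristic $p$, the Jordan canonical form of $J_r\otimes J_s$ over $F$ is $J_{\lambda_1}\oplus\cdots\oplus J_{\lambda_r}$ with $\lambda_1\ge\cdots\ge\lambda_r>0$; write $\lambda(r,s,p)=(\lambda_1,\dots,\lambda_r)$, a partition of $rs$ depending only on $r,s,p$. *)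

From HB Require Import structures.
From mathcomp Require Import all_boot all_order all_algebra.
From mathcomp Require Export mxtens.
Set Implicit Arguments. Unset Strict Implicit. Unset Printing Implicit Defensive.
Import GRing.Theory.
Local Open Scope ring_scope.

Definition Jmx (F : fieldType) (n : nat) : 'M[F]_n :=
  \matrix_(i < n, j < n) (((i : nat) == j) || ((j : nat) == i.+1))%:R.

Definition block_starts (lam : seq nat) : seq nat :=
  [seq sumn (take m lam) | m <- iota 0 (size lam).+1].

(* The block-diagonal matrix J_{lam_1} (+) ... (+) J_{lam_l}, written out
   entrywise: 1 on the diagonal, 1 at (i,i+1) unless i+1 starts a new block. *)
Definition jordan_mx (F : fieldType) (n : nat) (lam : seq nat) : 'M[F]_n :=
  \matrix_(i < n, j < n)
    (((i : nat) == j) || (((j : nat) == i.+1) && ((j : nat) \notin block_starts lam)))%:R.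

Definition jordan_type (F : fieldType) (n : nat) (A : 'M[F]_n) (lam : seq nat) : Prop :=
  [/\ sumn lam = n, sorted geq lam, all (fun x => 0 < x)%N lam &
      exists P : 'M[F]_n, P \in unitmx /\ P *m A *m invmx P = jordan_mx F n lam].

Definition mult_partition (q : nat) (lam : seq nat) : seq nat :=
  flatten [seq nseq q (q * x)%N | x <- lam].

(* Let q = p^k and let K(A) be the block companion matrix of X^q - A, so that
   K(A)^q = A (x) 1.  Three similarities prove the theorem.
   - In characteristic p the binomial coefficients C(q, c), 0 < c < q, vanish,
     so conjugating by the Pascal matrix turns K(J_n) into J_(nq).
   - For invertible A, reindexing the companion coordinates by
     (a, b) |-> (a + b mod q, a), with the wrap-around part weighted by A, gives
     K(A) (x) K(B) ~ K(A (x) B) (x) 1_q.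
   - K preserves similarity and direct sums, so A (x) B ~ J_lam_1 (+) ... (+) J_lam_l
     yields K(A (x) B) (x) 1_q ~ (+)_i K(J_lam_i) (x) 1_q ~ (+)_i q copies of J_(q lam_i).
   Hence J_(qr) (x) J_(qs) ~ K(J_r) (x) K(J_s) ~ K(J_r (x) J_s) (x) 1_q has the
   q-multiple of lam(r, s, p) as its Jordan type. *)

From HB Require Import structures.
From mathcomp Require Import all_boot all_order all_algebra.
From mathcomp Require Import mxtens zify ring.

Set Implicit Arguments. Unset Strict Implicit. Unset Printing Implicit Defensive.
Import GRing.Theory.

(** * Partitions *)

Lemma block_starts_cons x l :
  block_starts (x :: l) = 0 :: map (addn x) (block_starts l).
Proof.
rewrite /block_starts /= -[1]addn0 iotaDl -!map_comp.
by congr [:: _, _ & _]; rewrite -[(1 + 0).+1]/(2 + 0) iotaDl -map_comp.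
Qed.

Lemma mem_map_addn x (s : seq nat) j :
  (j \in map (addn x) s) = (x <= j) && (j - x \in s).
Proof.
case: (leqP x j) => [le|lt] /=; first by rewrite -{1}(subnKC le) (mem_map (@addnI x)).
by apply/mapP => -[y _ e]; move: lt; rewrite e ltnNge leq_addr.
Qed.

Lemma mem_block_starts_cons x l j :
  (j \in block_starts (x :: l)) = (j == 0) || (x <= j) && (j - x \in block_starts l).
Proof. by rewrite block_starts_cons in_cons mem_map_addn. Qed.

Lemma block_starts0 l : 0 \in block_starts l.
Proof. by case: l => [|x l]; rewrite ?mem_block_starts_cons. Qed.

Lemma sumn_block_starts l : sumn l \in block_starts l.
Proof.
by elim: l => [|x l IH] //; rewrite mem_block_starts_cons /= leq_addr addKn IH orbT.
Qed.

Lemma block_starts_catl l1 l2 j : j <= sumn l1 ->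
  (j \in block_starts (l1 ++ l2)) = (j \in block_starts l1).
Proof.
elim: l1 j => [|x l1 IH] j /=; first by rewrite leqn0 => /eqP->; rewrite block_starts0.
move=> le; rewrite !mem_block_starts_cons; case: (j == 0) => //=.
by case: (leqP x j) => //= xj; rewrite IH // leq_subLR.
Qed.

Lemma block_starts_catr l1 l2 j : sumn l1 <= j ->
  (j \in block_starts (l1 ++ l2)) = (j - sumn l1 \in block_starts l2).
Proof.
elim: l1 j => [|x l1 IH] j /=; first by rewrite subn0.
move=> le; have xj : x <= j by apply: leq_trans le; apply: leq_addr.
rewrite !mem_block_starts_cons xj IH ?leq_subRL // subnDA.
case: eqP => //= j0; move: le; rewrite j0 leqn0 addn_eq0 => /andP[/eqP-> /eqP->].
by rewrite block_starts0.
Qed.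

Lemma sumn_mult_partition q lam : sumn (mult_partition q lam) = q * q * sumn lam.
Proof.
elim: lam => [|x l IH] /=; first by rewrite muln0.
rewrite /mult_partition /= sumn_cat sumn_nseq -/(mult_partition q l) IH; lia.
Qed.

Lemma mem_mult_partition q lam y :
  y \in mult_partition q lam -> exists2 x, x \in lam & y = q * x.
Proof.
elim: lam => [|x l IH] //; rewrite /mult_partition /= mem_cat => /orP[/nseqP[-> _]|].
  by exists x; rewrite ?mem_head.
by case/IH => z zl ->; exists z; rewrite // inE zl orbT.
Qed.

Lemma sorted_mult_partition q lam : sorted geq lam -> sorted geq (mult_partition q lam).
Proof.
have geq_trans : transitive geq by apply: rev_trans; apply: leq_trans.
elim: lam => [|x l IH] //=; rewrite (path_sortedE geq_trans) => /andP[/allP lx sl].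
rewrite /mult_partition /= -/(mult_partition q l).
have ys : all (geq (q * x)) (mult_partition q l).
  by apply/allP => y /mem_mult_partition[z zl ->]; rewrite /= leq_mul2l [z <= x](lx z zl) orbT.
move: (IH sl) ys => {IH}; move: (q * x) (mult_partition q l) => y s ss ys.
elim: q => [|n IHn] //=; rewrite (path_sortedE geq_trans) IHn andbT all_cat ys andbT.
by apply/allP => z /nseqP[-> _] /=.
Qed.

Lemma mult_partition_gt0 q lam : 0 < q -> all (fun x => 0 < x) lam ->
  all (fun x => 0 < x) (mult_partition q lam).
Proof.
move=> q0 /allP lam_pos; apply/allP => y /mem_mult_partition[z zl ->].
by rewrite /= muln_gt0 q0 lam_pos.
Qed.

Local Open Scope ring_scope.

(** * Similarity *)

Section Similarity.
Variable F : fieldType.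

(* Similarity between square matrices of sizes that are equal, but possibly
   not convertible, such as [m * n] and [n * m]. *)
Definition mxsim m n (A : 'M[F]_m) (B : 'M[F]_n) :=
  exists (P : 'M[F]_(m, n)) (Q : 'M[F]_(n, m)),
    [/\ P *m Q = 1%:M, Q *m P = 1%:M & A *m P = P *m B].

Lemma mxsim_refl n (A : 'M[F]_n) : mxsim A A.
Proof. by exists 1%:M, 1%:M; rewrite !mulmx1 mul1mx. Qed.

Lemma mxsim_sym m n (A : 'M[F]_m) (B : 'M[F]_n) : mxsim A B -> mxsim B A.
Proof.
case=> P [Q [PQ QP AP]]; exists Q, P; split => //.
by rewrite -[B *m Q]mul1mx -QP -mulmxA (mulmxA P) -AP -!mulmxA PQ mulmx1.
Qed.

Lemma mxsim_trans m n o (A : 'M[F]_m) (B : 'M[F]_n) (C : 'M[F]_o) :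
  mxsim A B -> mxsim B C -> mxsim A C.
Proof.
case=> P [Q [PQ QP AP]] [P' [Q' [PQ' QP' BP']]]; exists (P *m P'), (Q' *m Q); split.
- by rewrite mulmxA -(mulmxA P) PQ' mulmx1 PQ.
- by rewrite mulmxA -(mulmxA Q') QP mulmx1 QP'.
- by rewrite mulmxA AP -mulmxA BP' mulmxA.
Qed.

Lemma mxsim_square n (A B P Q : 'M[F]_n) :
  P *m Q = 1%:M -> A *m P = P *m B -> mxsim A B.
Proof. by move=> PQ AP; exists P, Q; split; rewrite // mulmx1C. Qed.

Lemma mxsimP n (A B : 'M[F]_n) :
  mxsim A B <-> exists P : 'M[F]_n, P \in unitmx /\ P *m A *m invmx P = B.
Proof.
split=> [[P [Q [PQ QP AP]]]|[P [uP <-]]].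
  have [uQ _] := mulmx1_unit QP.
  have QV : invmx Q = P by rewrite -[invmx Q]mulmx1 -QP mulmxA mulVmx // mul1mx.
  by exists Q; rewrite QV -mulmxA AP mulmxA QP mul1mx.
exists (invmx P), P; split; rewrite ?mulVmx ?mulmxV //.
by rewrite !mulmxA mulVmx // mul1mx.
Qed.

Lemma tensmx11 m n : (1%:M : 'M[F]_m) *t (1%:M : 'M[F]_n) = 1%:M.
Proof.
apply/matrixP=> i j; case: (mxtens_indexP i)=> i0 i1; case: (mxtens_indexP j)=> j0 j1.
by rewrite tensmxE !mxE -natrM mulnb (inj_eq (can_inj (@mxtens_indexK _ _))) xpair_eqE.
Qed.

Lemma mxsim_tens m n m' n' (A : 'M[F]_m) (A' : 'M[F]_m') (B : 'M[F]_n) (B' : 'M[F]_n') :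
  mxsim A A' -> mxsim B B' -> mxsim (A *t B) (A' *t B').
Proof.
case=> P [Q [PQ QP AP]] [P' [Q' [PQ' QP' BP']]]; exists (P *t P'), (Q *t Q').
by rewrite !tensmx_mul PQ PQ' QP QP' AP BP' !tensmx11.
Qed.

Lemma mxsim_block m n m' n' (A : 'M[F]_m) (A' : 'M[F]_m') (B : 'M[F]_n) (B' : 'M[F]_n') :
  mxsim A A' -> mxsim B B' -> mxsim (block_mx A 0 0 B) (block_mx A' 0 0 B').
Proof.
case=> P [Q [PQ QP AP]] [P' [Q' [PQ' QP' BP']]].
exists (block_mx P 0 0 P'), (block_mx Q 0 0 Q').
by rewrite !mulmx_block !mulmx0 !mul0mx !addr0 !add0r PQ PQ' QP QP' AP BP' -!scalar_mx_block.
Qed.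

Lemma mxsim_reindex m n (A : 'M[F]_m) (B : 'M[F]_n) (s : 'I_n -> 'I_m) (t : 'I_m -> 'I_n) :
  cancel s t -> cancel t s -> (forall k l, A (s k) (s l) = B k l) -> mxsim A B.
Proof.
move=> st ts AB; have s_eq k i : (i == s k) = (t i == k).
  by apply/eqP/eqP => [->|<-]; rewrite ?st ?ts.
exists (\matrix_(i, k) (i == s k)%:R), (\matrix_(k, i) (i == s k)%:R); split.
- apply/matrixP=> i j; rewrite !mxE (bigD1 (t i)) //= big1 => [|k kt].
    by rewrite !mxE ts eqxx mul1r addr0 eq_sym.
  by rewrite !mxE s_eq [t i == k]eq_sym (negbTE kt) mul0r.
- apply/matrixP=> i j; rewrite !mxE (bigD1 (s i)) //= big1 => [|k /negbTE ks].
    by rewrite !mxE eqxx mul1r (can_eq st) addr0.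
  by rewrite !mxE ks mul0r.
- apply/matrixP=> i j; rewrite !mxE (bigD1 (s j)) //= big1 => [|k /negbTE ks].
    rewrite (bigD1 (t i)) //= big1 => [|k kt].
      by rewrite !mxE eqxx mulr1 ts eqxx mul1r -AB ts !addr0.
    by rewrite !mxE s_eq [t i == k]eq_sym (negbTE kt) mul0r.
  by rewrite !mxE ks mulr0.
Qed.

End Similarity.

Lemma split_ordP a b (k : 'I_(a + b)) :
  (exists i, k = lshift b i) \/ (exists i, k = rshift a i).
Proof. by case: (splitP k) => j e; [left|right]; exists j; apply: val_inj. Qed.

Section TensorReindex.
Variable F : fieldType.

Lemma tensmxDl m n p q (A B : 'M[F]_(m, n)) (C : 'M[F]_(p, q)) :
  (A + B) *t C = A *t C + B *t C.
Proof. by apply/matrixP => i j; rewrite !mxE mulrDl. Qed.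

Lemma tensmxDr m n p q (A : 'M[F]_(m, n)) (B C : 'M[F]_(p, q)) :
  A *t (B + C) = A *t B + A *t C.
Proof. by apply/matrixP => i j; rewrite !mxE mulrDr. Qed.

Lemma tens_block_mxE a b q (A : 'M[F]_a) (B : 'M[F]_b) (C : 'M[F]_q) k l :
  let c := cast_ord (esym (mulnDl a b q)) in
  (block_mx A 0 0 B *t C) (c k) (c l) = block_mx (A *t C) 0 0 (B *t C) k l.
Proof.
rewrite /=.
have castl (i : 'I_a) (d : 'I_q) :
    cast_ord (esym (mulnDl a b q)) (lshift (b * q) (mxtens_index (i, d)))
    = mxtens_index (lshift b i, d) by apply: val_inj.
have castr (i : 'I_b) (d : 'I_q) :
    cast_ord (esym (mulnDl a b q)) (rshift (a * q) (mxtens_index (i, d)))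
    = mxtens_index (rshift a i, d) by apply: val_inj => /=; rewrite mulnDl addnA.
case: (split_ordP k) => -[i ->].
all: case: (mxtens_indexP i) => i0 i1.
all: case: (split_ordP l) => -[j ->].
all: case: (mxtens_indexP j) => j0 j1.
all: by rewrite ?castl ?castr !tensmxE ?block_mxEul ?block_mxEur ?block_mxEdl ?block_mxEdr
  ?mxE ?mul0r ?mxtens_indexK.
Qed.

Lemma mxsim_tens_block a b q (A : 'M[F]_a) (B : 'M[F]_b) (C : 'M[F]_q) :
  mxsim (block_mx A 0 0 B *t C) (block_mx (A *t C) 0 0 (B *t C)).
Proof.
by apply: (mxsim_reindex (t := cast_ord (mulnDl a b q))) (@tens_block_mxE _ _ _ A B C);
  move=> x; apply: val_inj.
Qed.

Lemma mxsim_scalar1_tens n (A : 'M[F]_n) : mxsim ((1%:M : 'M[F]_1) *t A) A.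
Proof.
rewrite tens_scalar1mx.
apply: (@mxsim_reindex _ _ _ _ _ (cast_ord (esym (mul1n n))) (cast_ord (mul1n n))).
- by move=> x; apply: val_inj.
- by move=> x; apply: val_inj.
by move=> k l; rewrite castmxE; congr (A _ _); apply: val_inj.
Qed.

Lemma mxsim_tensC m n (A : 'M[F]_m) (B : 'M[F]_n) : mxsim (A *t B) (B *t A).
Proof.
pose swap a b (k : 'I_(a * b)) : 'I_(b * a) :=
  mxtens_index ((mxtens_unindex k).2, (mxtens_unindex k).1).
have swapK a b : cancel (@swap a b) (@swap b a).
  by move=> k; case: (mxtens_indexP k) => i j; rewrite /swap !mxtens_indexK.
apply: (mxsim_reindex (swapK _ _) (swapK _ _)) => k l.
case: (mxtens_indexP k) => i j; case: (mxtens_indexP l) => i' j'.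
by rewrite /swap !mxtens_indexK /= !tensmxE mulrC.
Qed.

End TensorReindex.

Section JordanType.
Variable F : fieldType.

Lemma mxsim_jordan_mx_cat l1 l2 :
  mxsim (block_mx (jordan_mx F (sumn l1) l1) 0 0 (jordan_mx F (sumn l2) l2))
        (jordan_mx F (sumn (l1 ++ l2)) (l1 ++ l2)).
Proof.
have e : sumn (l1 ++ l2) = (sumn l1 + sumn l2)%N by rewrite sumn_cat.
apply/mxsim_sym/(@mxsim_reindex _ _ _ _ _ (cast_ord (esym e)) (cast_ord e)).
- by move=> x; apply: val_inj.
- by move=> x; apply: val_inj.
move=> k l; case: (split_ordP k) => -[i ->]; case: (split_ordP l) => -[j ->];
  rewrite ?block_mxEul ?block_mxEur ?block_mxEdl ?block_mxEdr !mxE /= ?mxE //.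
- by rewrite block_starts_catl // ltnW.
- rewrite (ltn_eqF (leq_trans (ltn_ord i) (leq_addr _ _))) /=.
  case: eqP => //= ej; rewrite block_starts_catl; last by rewrite ej.
  have -> : j = 0%N :> nat by move: ej (ltn_ord i); lia.
  by rewrite addn0 sumn_block_starts.
- rewrite (gtn_eqF (leq_trans (ltn_ord j) (leq_addr _ _))) /=.
  by have /eqP/negbTE-> : j <> (sumn l1 + i).+1 :> nat by move: (ltn_ord j); lia.
- by rewrite eqn_add2l -addnS eqn_add2l block_starts_catr ?leq_addr // addKn.
Qed.

Lemma jordan_mx1 x : jordan_mx F (sumn [:: x]) [:: x] = Jmx F (sumn [:: x]).
Proof.
apply/matrixP => i j; rewrite !mxE mem_block_starts_cons /=; case: (i == j :> nat) => //=.
case: eqP => //= ej; have lt_ix : (i.+1 < x)%N by have := ltn_ord j; rewrite /=; lia.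
by rewrite ej /= leqNgt lt_ix.
Qed.

Definition has_jordan_type n (A : 'M[F]_n) (lam : seq nat) :=
  mxsim A (jordan_mx F (sumn lam) lam).

Lemma jordan_typeE n (A : 'M[F]_n) lam :
  jordan_type A lam <->
  [/\ sumn lam = n, sorted geq lam, all (fun x => 0 < x)%N lam & has_jordan_type A lam].
Proof.
by split=> -[sum_lam ? ?]; rewrite /has_jordan_type sum_lam => /mxsimP.
Qed.

Lemma has_jordan_type_mxsim m n (A : 'M[F]_m) (B : 'M[F]_n) lam :
  mxsim A B -> has_jordan_type B lam -> has_jordan_type A lam.
Proof. exact: mxsim_trans. Qed.

Lemma has_jordan_type_block m n (A : 'M[F]_m) (B : 'M[F]_n) l1 l2 :
  has_jordan_type A l1 -> has_jordan_type B l2 ->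
  has_jordan_type (block_mx A 0 0 B) (l1 ++ l2).
Proof.
by move=> jA jB; apply: mxsim_trans (mxsim_jordan_mx_cat _ _); apply: mxsim_block.
Qed.

Lemma has_jordan_type_Jmx x : has_jordan_type (Jmx F x) [:: x].
Proof. by rewrite /has_jordan_type jordan_mx1 /= addn0; apply: mxsim_refl. Qed.

Lemma has_jordan_type_nil (A : 'M[F]_0) : has_jordan_type A [::].
Proof.
by rewrite /has_jordan_type (flatmx0 A) (flatmx0 (jordan_mx _ _ _)); apply: mxsim_refl.
Qed.

Lemma has_jordan_type_scalar1_tens q n c (C : 'M[F]_n) :
  has_jordan_type C [:: c] -> has_jordan_type ((1%:M : 'M[F]_q) *t C) (nseq q c).
Proof.
move=> jC; elim: q => [|q IH]; first exact: has_jordan_type_nil.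
rewrite [nseq _ _]/= -cat1s -[q.+1]/(1 + q)%N scalar_mx_block.
apply: has_jordan_type_mxsim (mxsim_tens_block _ _ _) _.
by apply: has_jordan_type_block => //; apply: has_jordan_type_mxsim (mxsim_scalar1_tens _) jC.
Qed.

End JordanType.

(** * Block companion matrices *)

Definition nilJ (F : fieldType) n : 'M[F]_n := \matrix_(a, b) ((b : nat) == a.+1)%:R.

Definition wrap_mx (F : fieldType) q' : 'M[F]_q'.+1 :=
  \matrix_(a, b) (((a : nat) == q') && ((b : nat) == 0%N))%:R.

(* Up to reindexing, the q x q block matrix with identity blocks on the
   superdiagonal and [A] in the bottom-left corner: the block companion matrix
   of [X^q - A]. *)
Definition companion_mx (F : fieldType) q' m (A : 'M[F]_m) : 'M[F]_(m * q'.+1) :=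
  1%:M *t nilJ F q'.+1 + A *t wrap_mx F q'.

Section Companion.
Variables (F : fieldType) (q' : nat).
Local Notation q := q'.+1.
Local Notation K := (companion_mx q').

Lemma mxsim_companion m n (A : 'M[F]_m) (B : 'M[F]_n) : mxsim A B -> mxsim (K A) (K B).
Proof.
case=> P [Q [PQ QP AP]]; exists (P *t 1%:M), (Q *t 1%:M).
by rewrite /companion_mx !mulmxDl !mulmxDr !tensmx_mul !mulmx1 !mul1mx PQ QP AP !tensmx11.
Qed.

Lemma mxsim_companion_block a b (A : 'M[F]_a) (B : 'M[F]_b) :
  mxsim (K (block_mx A 0 0 B)) (block_mx (K A) 0 0 (K B)).
Proof.
apply: (@mxsim_reindex _ _ _ _ _ (cast_ord (esym (mulnDl a b q))) (cast_ord (mulnDl a b q))).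
- by move=> x; apply: val_inj.
- by move=> x; apply: val_inj.
move=> k l; rewrite /companion_mx mxE (scalar_mx_block a b 1) !tens_block_mxE.
have block_add (X1 X2 : 'M[F]_(a * q)) (Y1 Y2 : 'M[F]_(b * q)) :
    block_mx (X1 + X2) 0 0 (Y1 + Y2) = block_mx X1 0 0 Y1 + block_mx X2 0 0 Y2
  by rewrite add_block_mx !addr0.
by rewrite block_add [in RHS]mxE.
Qed.

Hypothesis companion_Jmx : forall x, mxsim (K (Jmx F x)) (Jmx F (x * q)).

Lemma has_jordan_type_companion_jordan lam :
  has_jordan_type (K (jordan_mx F (sumn lam) lam) *t (1%:M : 'M[F]_q))
                  (mult_partition q lam).
Proof.
elim: lam => [|x l IH]; first exact: has_jordan_type_nil.
have cat_x := mxsim_jordan_mx_cat F [:: x] l; rewrite jordan_mx1 in cat_x.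
apply: has_jordan_type_mxsim (has_jordan_type_block _ IH).
  apply: mxsim_trans (mxsim_tens_block _ _ _).
  apply: mxsim_tens (mxsim_refl _); apply: mxsim_trans (mxsim_companion_block _ _).
  exact: mxsim_companion (mxsim_sym cat_x).
apply: (@has_jordan_type_mxsim _ _ _ _ ((1%:M : 'M[F]_q) *t Jmx F (sumn [:: x] * q))).
  apply: mxsim_trans (mxsim_tensC _ _); exact: mxsim_tens (mxsim_refl _).
by apply: has_jordan_type_scalar1_tens; rewrite /= addn0 mulnC; apply: has_jordan_type_Jmx.
Qed.

End Companion.

(** * The companion matrix of a Jordan block in characteristic p *)

Lemma pchar_bin_prime_pow_eq0 (F : fieldType) p k c : p \in [pchar F] ->
  (0 < c < p ^ k)%N -> 'C(p ^ k, c)%:R = 0 :> F.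
Proof.
move=> pF /andP[c_gt0 c_lt].
have pk_nat : [pchar {poly F}].-nat (p ^ k)%N.
  rewrite (eq_pnat _ (pchar_poly F)) (eq_pnat _ (pcharf_eq pF)) pnatX pnat_id //.
  exact: pcharf_prime pF.
have := congr1 (fun P : {poly F} => P`_c) (exprDn_pchar ('X : {poly F}) 1 pk_nat).
rewrite exprD1n expr1n coefD coefXn coef1 (gtn_eqF c_gt0) (ltn_eqF c_lt) addr0.
rewrite coef_sum (bigD1 (Ordinal (leq_trans c_lt (leqnSn _)))) //= big1 => [|i ne].
  by rewrite coefMn coefXn eqxx addr0 mulr1n.
rewrite coefMn coefXn; case: eqP => ci; last by rewrite mul0rn.
by case/eqP: ne; apply: val_inj.
Qed.

Section CompanionJordanBlock.
Variables (F : fieldType) (q' : nat).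
Local Notation q := q'.+1.
Local Notation N := (nilJ F q).
Local Notation E := (wrap_mx F q').
Hypothesis bin_q_eq0 : forall c, (0 < c < q)%N -> 'C(q, c)%:R = 0 :> F.

Lemma sum_delta n (G : 'I_n -> F) (j : 'I_n) :
  \sum_(b < n) ((b : nat) == j)%:R * G b = G j.
Proof.
rewrite (bigD1 j) //= eqxx mul1r big1 ?addr0 // => b ne.
by rewrite (_ : _ == _ = false) ?mul0r //; apply/negbTE; apply: contra ne => /eqP/val_inj->.
Qed.

Lemma sum_delta_out n (G : 'I_n -> F) (j : nat) : (n <= j)%N ->
  \sum_(b < n) ((b : nat) == j)%:R * G b = 0.
Proof.
by move=> le; rewrite big1 // => b _; rewrite ltn_eqF ?mul0r // (leq_trans _ le).
Qed.

Lemma Jmx_nilJ n : Jmx F n = 1%:M + nilJ F n.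
Proof.
apply/matrixP => i j; rewrite !mxE; case: (eqVneq i j) => [->|ne].
  by rewrite eqxx ltn_eqF ?addr0.
by rewrite add0r (_ : (i : nat) == j = false) //; apply/negbTE; apply: contra ne => /eqP/val_inj->.
Qed.

Lemma mul_nilJ_mx (X : 'M[F]_q) a c :
  (N *m X) a c = if (a < q')%N then X (inord a.+1) c else 0.
Proof.
rewrite mxE; under eq_bigr do rewrite mxE.
case: ifP => lt; first by rewrite -(sum_delta (X^~ c) (inord a.+1)) inordK.
by rewrite sum_delta_out //; move: (ltn_ord a) lt; rewrite ltnS leq_eqVlt => /orP[/eqP->|->].
Qed.

Lemma mul_wrap_mx (X : 'M[F]_q) a c :
  (E *m X) a c = if (a == q' :> nat) then X ord0 c else 0.
Proof.
rewrite mxE; under eq_bigr do rewrite mxE.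
case: ifP => e; last by rewrite big1 // => b _; rewrite mul0r.
by rewrite -(sum_delta (X^~ c) ord0); apply: eq_bigr => b _.
Qed.

Lemma mulmx_nilJ (X : 'M[F]_q) a c :
  (X *m N) a c = if (0 < c)%N then X a (inord c.-1) else 0.
Proof.
rewrite mxE; under eq_bigr do rewrite mxE.
case: c => [[|c] lt] /=; first by rewrite big1 // => b _; rewrite mulr0.
rewrite -(sum_delta (X a) (inord c)); apply: eq_bigr => b _.
by rewrite mulrC inordK ?eqSS 1?eq_sym // ltnW.
Qed.

Lemma mulmx_wrap (X : 'M[F]_q) a c :
  (X *m E) a c = if (c == 0 :> nat) then X a ord_max else 0.
Proof.
rewrite mxE; under eq_bigr do rewrite mxE.
case: ifP => e; last by rewrite big1 // => b _; rewrite andbF mulr0.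
by rewrite -(sum_delta (X a) ord_max); apply: eq_bigr => b _; rewrite andbT mulrC.
Qed.

Definition binomial_mx : 'M[F]_q := \matrix_(a, c) 'C(a, c)%:R.

Lemma binomial_mx_unit : binomial_mx \in unitmx.
Proof.
rewrite unitmxE det_trig; first by rewrite big1 ?unitr1 // => i _; rewrite mxE binn.
by apply/forallP => i; apply/forallP => j; apply/implyP => lt; rewrite mxE bin_small.
Qed.

(* Pascal's rule [C(a+1, c) = C(a, c) + C(a, c-1)], except in the last row
   where it becomes [C(q, c) = 0] for [0 < c < q]. *)
Lemma companion_binomial_mx : (N + E) *m binomial_mx = binomial_mx *m Jmx F q.
Proof.
rewrite Jmx_nilJ mulmxDl mulmxDr mulmx1; apply/matrixP => a c.
rewrite ![(_ + _ : 'M_q) _ _]mxE mul_nilJ_mx mul_wrap_mx mulmx_nilJ !mxE.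
case: (ltngtP a q') => [lt|gt|eq].
- rewrite addr0 inordK //; case: c => [[|c] hc] /=; first by rewrite !bin0 addr0.
  by rewrite inordK ?binS ?natrD // ltnW.
- by move: (ltn_ord a); rewrite ltnS leqNgt gt.
- rewrite add0r; case: c => [[|c] hc] /=; first by rewrite !bin0 addr0.
  rewrite inordK ?bin0n /=; last exact: ltnW.
  by rewrite eq -natrD -binS bin_q_eq0.
Qed.

Lemma wrap_binomial_mx : E *m binomial_mx = binomial_mx *m E.
Proof.
apply/matrixP => a c; rewrite mul_wrap_mx mulmx_wrap !mxE.
case: (eqVneq (c : nat) 0%N) => [->|ne]; case: (eqVneq (a : nat) q') => [ea|na] //=.
- by rewrite ea !binn.
- by rewrite bin_small //; move: (ltn_ord a); rewrite ltnS leq_eqVlt (negbTE na).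
- by rewrite bin0n (negbTE ne).
Qed.

Lemma Jmx_muln_tens n : Jmx F (n * q) = 1%:M *t Jmx F q + nilJ F n *t E.
Proof.
apply/matrixP => k l; case: (mxtens_indexP k) => i a; case: (mxtens_indexP l) => j b.
rewrite [(_ + _ : 'M_(n * q)) _ _]mxE !tensmxE !mxE /=.
have diagE : ((i * q + a)%N == (j * q + b)%N) = ((i : nat) == j) && ((a : nat) == b).
  by rewrite eq_addl_mul // xpair_eqE.
have superE : ((j * q + b)%N == (i * q + a).+1) =
    if (a < q')%N then ((j : nat) == i) && ((b : nat) == a.+1)
    else ((j : nat) == i.+1) && ((b : nat) == 0%N).
  case: ifP => lt; first by rewrite -addnS eq_addl_mul // xpair_eqE.
  have -> : (a : nat) = q' by move: (ltn_ord a) lt; rewrite ltnS leq_eqVlt => /orP[/eqP|->].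
  by rewrite -addnS -mulSnr -[(i.+1 * q)%N]addn0 eq_addl_mul // xpair_eqE.
rewrite diagE superE -(inj_eq val_inj) /=.
move: (ltn_ord a) (ltn_ord b); set i' := nat_of_ord i; set j' := nat_of_ord j;
  set a' := nat_of_ord a; set b' := nat_of_ord b => ha hb.
case: (ltnP a' q') => la;
case: (i' =P j') => ?; case: (a' =P b') => ?; case: (b' =P a'.+1) => ?;
case: (j' =P i') => ?; case: (j' =P i'.+1) => ?; case: (b' =P 0%N) => ?;
case: (a' =P q') => ? /=; rewrite ?(mul1r, mul0r, addr0, add0r) //; exfalso; lia.
Qed.

Lemma mxsim_companion_Jmx n : mxsim (companion_mx q' (Jmx F n)) (Jmx F (n * q)).
Proof.
apply: (@mxsim_square _ _ _ _ (1%:M *t binomial_mx) (1%:M *t invmx binomial_mx)).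
  by rewrite tensmx_mul mulmx1 mulmxV ?binomial_mx_unit // tensmx11.
rewrite /companion_mx Jmx_nilJ Jmx_muln_tens tensmxDl !mulmxDl !mulmxDr !tensmx_mul.
rewrite !mul1mx !mulmx1 -companion_binomial_mx mulmxDl wrap_binomial_mx tensmxDr.
by rewrite addrA.
Qed.

End CompanionJordanBlock.

(** * Tensor products of companion matrices *)

Lemma inord_valE n (x : nat) :
  ((inord x : 'I_n.+1) : nat) = if (x < n.+1)%N then x else 0%N.
Proof. by rewrite /inord val_insubd. Qed.

Lemma mxtens_index_eqE m n (i i' : 'I_m) (j j' : 'I_n) :
  (mxtens_index (i, j) == mxtens_index (i', j')) = ((i : nat) == i') && ((j : nat) == j').
Proof. by rewrite (inj_eq (can_inj (@mxtens_indexK _ _))) xpair_eqE. Qed.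

Ltac tens_entrywise :=
  let k := fresh "k" in let l := fresh "l" in
  let i := fresh "i" in let a := fresh "a" in let j := fresh "j" in let b := fresh "b" in
  apply/matrixP => k l; case: (mxtens_indexP k) => i a; case: (mxtens_indexP l) => j b;
  have := ltn_ord i; have := ltn_ord a; have := ltn_ord j; have := ltn_ord b;
  move=> ? ? ? ?.

Ltac ord_hyps_to_nat :=
  repeat match goal with
  | H : @eq (ordinal _) ?x ?y |- _ =>
      let H' := fresh in (have H' : (x : nat) = y by rewrite H); clear H
  | H : ~ (@eq (ordinal _) ?x ?y) |- _ =>
      let H' := fresh in
      (have H' : (x : nat) <> y by move=> e; apply: H; apply: val_inj); clear H
  end.

Ltac index_cases :=
  repeat (match goal with
  | |- context [ if ?b then _ else _ ] => case: ifP => ?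
  | |- context [ @eq_op _ ?x ?y ] => case: (x =P y) => ?
  | |- context [ (?x <= ?y)%N ] => case: (leqP x y) => ?
  end; try (exfalso; ord_hyps_to_nat; lia));
  rewrite /= ?(mulr1n, mulr0n, mul1r, mul0r, mulr1, mulr0, addr0, add0r) //.

Definition pfun_mx (F : fieldType) m n (c : pred 'I_m) (f : 'I_m -> 'I_n) : 'M[F]_(m, n) :=
  \matrix_(i, j) (c i && (j == f i))%:R.

Lemma mul_pfun_mx (F : fieldType) m n p (c : pred 'I_m) (f : 'I_m -> 'I_n)
    (X : 'M[F]_(n, p)) i j :
  (pfun_mx F c f *m X) i j = if c i then X (f i) j else 0.
Proof.
rewrite mxE; case: ifP => ci; last by rewrite big1 // => k _; rewrite mxE ci mul0r.
rewrite (bigD1 (f i)) //= !mxE ci eqxx mul1r big1 ?addr0 // => k /negbTE ne.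
by rewrite mxE ne andbF mul0r.
Qed.

Section Twist.
Variables (F : fieldType) (q' : nat).
Local Notation q := q'.+1.
Local Notation N := (nilJ F q).
Local Notation E := (wrap_mx F q').
Local Notation u k := (mxtens_unindex k).
Local Notation idx := mxtens_index.

(* [twist_lo + twist_hi] is the permutation matrix of [(a, b) |-> (a + b mod q, a)];
   [twist_hi] is its wrap-around part. *)
Definition twist_lo : 'M[F]_(q * q) :=
  pfun_mx F (fun k => ((u k).1 + (u k).2 < q)%N)
    (fun k => idx (inord ((u k).1 + (u k).2), (u k).1)).
Definition twist_hi : 'M[F]_(q * q) :=
  pfun_mx F (fun k => (q <= (u k).1 + (u k).2)%N)
    (fun k => idx (inord ((u k).1 + (u k).2 - q), (u k).1)).
Definition untwist_lo : 'M[F]_(q * q) :=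
  pfun_mx F (fun k => ((u k).2 <= (u k).1)%N)
    (fun k => idx ((u k).2, inord ((u k).1 - (u k).2))).
Definition untwist_hi : 'M[F]_(q * q) :=
  pfun_mx F (fun k => ((u k).1 < (u k).2)%N)
    (fun k => idx ((u k).2, inord ((u k).1 + q - (u k).2))).

Lemma nilJ_tens1 : N *t (1%:M : 'M[F]_q) =
  pfun_mx F (fun k => ((u k).1 < q')%N) (fun k => idx (inord ((u k).1).+1, (u k).2)).
Proof.
by tens_entrywise; rewrite !mxE !mxtens_indexK ?mxtens_index_eqE /= ?inord_valE; index_cases.
Qed.

Lemma wrap_tens1 : E *t (1%:M : 'M[F]_q) =
  pfun_mx F (fun k => (u k).1 == q' :> nat) (fun k => idx (ord0, (u k).2)).
Proof.
by tens_entrywise; rewrite !mxE !mxtens_indexK ?mxtens_index_eqE /= ?inord_valE; index_cases.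
Qed.

Ltac twist_entrywise :=
  rewrite ?nilJ_tens1 ?wrap_tens1 /twist_lo /twist_hi /untwist_lo /untwist_hi;
  tens_entrywise; rewrite ?[(_ + _ : 'M_(q * q)) _ _]mxE ?mul_pfun_mx !mxE;
  rewrite ?mxtens_indexK ?mxtens_index_eqE /= ?inord_valE; index_cases.

Lemma twist_mul_untwist :
  [/\ twist_lo *m untwist_lo + twist_hi *m untwist_hi = 1%:M,
      twist_lo *m untwist_hi = 0 & twist_hi *m untwist_lo = 0].
Proof. by split; twist_entrywise. Qed.

Lemma twist_lo_intertwine :
  [/\ (N *t (1%:M : 'M[F]_q)) *m twist_lo = twist_lo *m (N *t N),
      twist_lo *m (N *t E) = 0 &
      (E *t (1%:M : 'M[F]_q)) *m twist_lo = twist_lo *m (E *t E) + twist_hi *m (N *t E)].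
Proof. by split; twist_entrywise. Qed.

Lemma twist_hi_intertwine :
  [/\ (N *t (1%:M : 'M[F]_q)) *m twist_hi = twist_lo *m (E *t N) + twist_hi *m (N *t N),
      (E *t (1%:M : 'M[F]_q)) *m twist_hi = 0,
      twist_hi *m (E *t N) = 0 &
      twist_hi *m (E *t E) = 0].
Proof. by split; twist_entrywise. Qed.

End Twist.

Definition mxtens_swap_mid m1 m2 m3 m4 (k : 'I_(m1 * m2 * (m3 * m4))) :
    'I_(m1 * m3 * (m2 * m4)) :=
  let z := (mxtens_unindex k).1 in let e := (mxtens_unindex k).2 in
  mxtens_index (mxtens_index ((mxtens_unindex z).1, (mxtens_unindex e).1),
                mxtens_index ((mxtens_unindex z).2, (mxtens_unindex e).2)).

Lemma mxtens_swap_midE m1 m2 m3 m4 i1 i2 i3 i4 :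
  @mxtens_swap_mid m1 m2 m3 m4 (mxtens_index (mxtens_index (i1, i2), mxtens_index (i3, i4)))
  = mxtens_index (mxtens_index (i1, i3), mxtens_index (i2, i4)).
Proof. by rewrite /mxtens_swap_mid !mxtens_indexK. Qed.

Lemma mxtens_swap_midK m1 m2 m3 m4 :
  cancel (@mxtens_swap_mid m1 m2 m3 m4) (@mxtens_swap_mid m1 m3 m2 m4).
Proof.
move=> k; case: (mxtens_indexP k) => z e; case: (mxtens_indexP z) => i1 i2.
by case: (mxtens_indexP e) => i3 i4; rewrite !mxtens_swap_midE.
Qed.

Definition mxtens_assoc m1 m2 m3 (k : 'I_(m1 * (m2 * m3))) : 'I_(m1 * m2 * m3) :=
  let e := (mxtens_unindex k).2 in
  mxtens_index (mxtens_index ((mxtens_unindex k).1, (mxtens_unindex e).1),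
                (mxtens_unindex e).2).

Definition mxtens_unassoc m1 m2 m3 (k : 'I_(m1 * m2 * m3)) : 'I_(m1 * (m2 * m3)) :=
  let z := (mxtens_unindex k).1 in
  mxtens_index ((mxtens_unindex z).1,
                mxtens_index ((mxtens_unindex z).2, (mxtens_unindex k).2)).

Lemma mxtens_assocE m1 m2 m3 i1 i2 i3 :
  @mxtens_assoc m1 m2 m3 (mxtens_index (i1, mxtens_index (i2, i3))) =
  mxtens_index (mxtens_index (i1, i2), i3).
Proof. by rewrite /mxtens_assoc !mxtens_indexK. Qed.

Lemma mxtens_assocK m1 m2 m3 : cancel (@mxtens_assoc m1 m2 m3) (@mxtens_unassoc m1 m2 m3).
Proof.
move=> k; case: (mxtens_indexP k) => i1 e; case: (mxtens_indexP e) => i2 i3.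
by rewrite mxtens_assocE /mxtens_unassoc !mxtens_indexK.
Qed.

Lemma mxtens_unassocK m1 m2 m3 : cancel (@mxtens_unassoc m1 m2 m3) (@mxtens_assoc m1 m2 m3).
Proof.
move=> k; case: (mxtens_indexP k) => z i3; case: (mxtens_indexP z) => i1 i2.
by rewrite /mxtens_unassoc !mxtens_indexK mxtens_assocE.
Qed.

Section CompanionTens.
Variables (F : fieldType) (q' : nat).
Local Notation q := q'.+1.
Local Notation N := (nilJ F q).
Local Notation E := (wrap_mx F q').
Local Notation K := (companion_mx q').

(* [K A *t K B] and [K C *t 1], with their indices regrouped as
   [(matrix indices, companion indices)]. *)
Definition companion_tens m n (A : 'M[F]_m) (B : 'M[F]_n) : 'M[F]_(m * n * (q * q)) :=
  1%:M *t (N *t N) + (1%:M *t B) *t (N *t E) + (A *t 1%:M) *t (E *t N)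
  + (A *t B) *t (E *t E).

Definition companion_tens1 k (C : 'M[F]_k) : 'M[F]_(k * (q * q)) :=
  1%:M *t (N *t 1%:M) + C *t (E *t 1%:M).

Lemma mxsim_companion_tens_expand m n (A : 'M[F]_m) (B : 'M[F]_n) :
  mxsim (K A *t K B) (companion_tens A B).
Proof.
apply: (mxsim_reindex (@mxtens_swap_midK m n q q) (@mxtens_swap_midK m q n q)).
move=> k l; case: (mxtens_indexP k) => z e; case: (mxtens_indexP z) => v w;
case: (mxtens_indexP e) => a b; case: (mxtens_indexP l) => z' e';
case: (mxtens_indexP z') => v' w'; case: (mxtens_indexP e') => a' b'.
rewrite !mxtens_swap_midE tensmxE /companion_mx /companion_tens.
rewrite ![(_ + _ : 'M_(_ * _)) _ _]mxE !tensmxE -tensmx11 tensmxE.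
ring.
Qed.

Lemma mxsim_companion_tens1 k (C : 'M[F]_k) :
  mxsim (K C *t (1%:M : 'M[F]_q)) (companion_tens1 C).
Proof.
apply: (mxsim_reindex (@mxtens_assocK k q q) (@mxtens_unassocK k q q)).
move=> z l; case: (mxtens_indexP z) => i e; case: (mxtens_indexP e) => a b.
case: (mxtens_indexP l) => j e'; case: (mxtens_indexP e') => a' b'.
rewrite !mxtens_assocE tensmxE /companion_mx /companion_tens1.
by rewrite ![(_ + _ : 'M_(_ * _)) _ _]mxE !tensmxE mulrDl !mulrA.
Qed.

Lemma mxsim_companion_tens_twist m n (A : 'M[F]_m) (B : 'M[F]_n) : A \in unitmx ->
  mxsim (companion_tens1 (A *t B)) (companion_tens A B).
Proof.
move=> uA; have [lo_inv lo_hi hi_lo] := twist_mul_untwist F q'.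
have [lo_N lo_NE lo_E] := twist_lo_intertwine F q'.
have [hi_N hi_E hi_EN hi_EE] := twist_hi_intertwine F q'.
pose A1 : 'M[F]_(m * n) := A *t 1%:M.
apply: (@mxsim_square _ _ _ _ (1%:M *t twist_lo F q' + A1 *t twist_hi F q')
                              (1%:M *t untwist_lo F q' + (invmx A *t 1%:M) *t untwist_hi F q')).
  rewrite !mulmxDl !mulmxDr !tensmx_mul !mul1mx !mulmx1 lo_hi hi_lo !tensmx0 addr0 add0r.
  by rewrite mulmxV // tensmx11 -tensmxDr lo_inv tensmx11.
rewrite /companion_tens1 /companion_tens !mulmxDl !mulmxDr !tensmx_mul !mul1mx !mulmx1.
rewrite lo_N hi_N lo_E hi_E lo_NE hi_EN hi_EE !tensmx0 !tensmxDr.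
by rewrite !addr0 !addrA; congr (_ + _); rewrite addrAC.
Qed.

Lemma mxsim_companion_tens m n (A : 'M[F]_m) (B : 'M[F]_n) : A \in unitmx ->
  mxsim (K A *t K B) (K (A *t B) *t (1%:M : 'M[F]_q)).
Proof.
move=> uA; apply: mxsim_trans (mxsim_companion_tens_expand A B) _.
apply: mxsim_trans (mxsim_sym (mxsim_companion_tens_twist B uA)) _.
exact/mxsim_sym/mxsim_companion_tens1.
Qed.

End CompanionTens.

Lemma Jmx_unit (F : fieldType) n : Jmx F n \in unitmx.
Proof.
rewrite unitmxE -det_tr det_trig; first by rewrite big1 ?unitr1 // => i _; rewrite !mxE eqxx.
apply/forallP => i; apply/forallP => j; apply/implyP => lt.
by rewrite !mxE (gtn_eqF lt) (ltn_eqF (leqW lt)).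
Qed.

Theorem theorem5 (p r s k : nat) (F : fieldType) (lam : seq nat) :
  prime p -> p \in [pchar F] -> (0 < r)%N -> (r <= s)%N ->
  jordan_type (Jmx F r *t Jmx F s) lam ->
  jordan_type (Jmx F (p ^ k * r) *t Jmx F (p ^ k * s)) (mult_partition (p ^ k) lam).
Proof.
move=> p_pr pF _ _ /jordan_typeE[sum_lam sorted_lam lam_gt0 jordan_lam].
have [q' pk] : exists q', (p ^ k)%N = q'.+1.
  by exists (p ^ k).-1; rewrite prednK // expn_gt0 prime_gt0.
have companion_Jmx x : mxsim (companion_mx q' (Jmx F x)) (Jmx F (x * q'.+1)).
  by apply: mxsim_companion_Jmx => c; rewrite -pk; apply: pchar_bin_prime_pow_eq0.
rewrite pk; apply/jordan_typeE; split.
- by rewrite sumn_mult_partition sum_lam mulnACA.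
- exact: sorted_mult_partition.
- exact: mult_partition_gt0.
apply: has_jordan_type_mxsim (has_jordan_type_companion_jordan companion_Jmx lam).
rewrite ![(q'.+1 * _)%N]mulnC.
apply: mxsim_trans (mxsim_tens (mxsim_sym (companion_Jmx r)) (mxsim_sym (companion_Jmx s))) _.
apply: mxsim_trans (mxsim_companion_tens q' (Jmx F s) (Jmx_unit F r)) _.
exact: mxsim_tens (mxsim_companion _ jordan_lam) (mxsim_refl _).
Qed.
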